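(* Let $d\geq 1$ be a fixed integer. For each integer $n\geq1$ define $f_n:\mathbb{R}\to\mathbb{R}$ to be the function which is constant on each interval $\left[\frac{k-\frac nd}{\sqrt{n/d}},\frac{k+1-\frac nd}{\sqrt{n/d}}\right)$, $k\in\mathbb{Z}$, and satisfies $$f_n\!\left(\frac{k-\frac nd}{\sqrt{n/d}}\right)=\begin{cases}\sqrt{\frac nd}\,\dfrac{(n/d)^k e^{-n/d}}{k!} & \text{if } k \text{ is a non-negative integer},\\ 0 & \text{if } k \text{ is a negative integer}.\end{cases}$$ For a function $f:\mathbb{R}\to\mathbb{R}$ define $\Delta_n f(y)=\dfrac{f\big(y+\sqrt{d/n}\big)-f(y)}{\sqrt{d/n}}$ and let $\Delta_n^\alpha$ denote its $\alpha$-fold iterate. Then for each integer $\alpha\geq0$ and each $y\in\mathbb{R}$, $$\lim_{n\to\infty}\Delta_n^\alpha f_n(y)=\frac{\mathrm{d}^\alpha}{\mathrm{d}y^\alpha}\left(\frac{1}{\sqrt{2\pi}}e^{-y^2/2}\right).$$ Furthermore, for each integer $\alpha\geq0$ there exists a polynomial $P_\alpha$ such that $|\Delta_n^\alpha f_n(y)|<P_\alpha(y)e^{-|y|}$ for all $n\geq1$ and all $y\in\mathbb{R}$. *)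

From Stdlib Require Import Reals Lra Lia ZArith List.
From Coquelicot Require Import Coquelicot.
Open Scope R_scope.

Definition lam (d n : nat) : R := INR n / INR d.

(* f_n(y): constant on [(k - n/d)/sqrt(n/d), (k+1-n/d)/sqrt(n/d)), k in Z;
   y lies in the k-th interval iff k = floor(y*sqrt(n/d) + n/d). *)
Definition f_n (d n : nat) (y : R) : R :=
  let l := lam d n in
  let k := Int_part (y * sqrt l + l) in
  if (k <? 0)%Z then 0
  else sqrt l * (l ^ (Z.to_nat k) * exp (- l) / INR (fact (Z.to_nat k))).

Definition step (d n : nat) : R := sqrt (INR d / INR n).

Definition Delta (d n : nat) (f : R -> R) : R -> R :=
  fun y => (f (y + step d n) - f y) / step d n.

Definition Delta_iter (d n alpha : nat) (f : R -> R) : R -> R :=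
  Nat.iter alpha (Delta d n) f.

Definition gauss (y : R) : R := / sqrt (2 * PI) * exp (- y ^ 2 / 2).

(* real polynomial given by its list of coefficients (constant term first) *)
Fixpoint peval (p : list R) (y : R) : R :=
  match p with
  | nil => 0
  | c :: q => c + y * peval q y
  end.

From Pilot Require Import Defs.
From Stdlib Require Import Reals Lra Lia ZArith List.
From Coquelicot Require Import Coquelicot.
Open Scope R_scope.

(* Write [l = n / d], [s = sqrt l] and [k = floor (y s + l)].  Then [Delta_n^a f_n (y)] is
   [s ^ (a + 1)] times the [a]-th forward difference at [k] of the Poisson weights
   [p k = l ^ k e ^ (- l) / k!].  The identity [(k + 1) p (k + 1) = l p k] makes these scaled
   differences satisfy a discrete form of the recursion [g^(a+1) y = - y g^(a) y - a g^(a-1) y]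
   of the derivatives of the Gaussian [g], so both claims reduce, by induction on [a], to the
   case [a = 0]: the local limit theorem [s p k -> g y] and the bound [s p k <= C e ^ (- |x|)]
   with [x = (k - l) / s].  Both follow from the exact formula
   [s p k = exp (- ln (k / l) / 2 - r k - l h ((k - l) / l))], where
   [r k = ln k! - (k + 1/2) ln k + k] decreases to [ln (2 pi) / 2] (Stirling's formula, with the
   constant obtained from Wallis' integrals) and [h u = (1 + u) ln (1 + u) - u] behaves like
   [u ^ 2 / 2] near 0 and grows at least linearly for large [u]. *)

(** * Elementary inequalities *)

Lemma le_of_derive_nonneg (f df : R -> R) (a b : R) : a <= b ->
  (forall x, a <= x <= b -> is_derive f x (df x)) ->
  (forall x, a <= x <= b -> 0 <= df x) -> f a <= f b.
Proof.
intros hab hf hdf.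
destruct (Req_dec a b) as [<-|hne]; [lra|].
destruct (MVT_gen f a b df) as [c [hc Ec]].
- intros x hx. apply hf. rewrite Rmin_left, Rmax_right in hx; lra.
- intros x hx. rewrite Rmin_left, Rmax_right in hx by lra.
  apply continuity_pt_filterlim, (ex_derive_continuous (V := R_NormedModule)).
  exists (df x). apply hf; lra.
- rewrite Rmin_left, Rmax_right in hc by lra.
  assert (0 <= df c) by (apply hdf; lra). nra.
Qed.

Lemma exp_le (x y : R) : x <= y -> exp x <= exp y.
Proof. intros [h| ->]; [left; apply exp_increasing; exact h|right; reflexivity]. Qed.

Lemma sqrt_exp_ln (x : R) : 0 < x -> sqrt x = exp (ln x / 2).
Proof.
intros hx. rewrite <- (exp_ln x) at 1 by exact hx.
replace (ln x) with (ln x / 2 + ln x / 2) at 1 by field.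
rewrite exp_plus. apply sqrt_square. left; apply exp_pos.
Qed.

Lemma ln_1p_le (u : R) : -1 < u -> ln (1 + u) <= u.
Proof.
intros hu. rewrite <- (ln_exp u) at 2. apply ln_le; [lra|].
generalize (exp_ineq1_le u). lra.
Qed.

Lemma ln_le_self (x : R) : 0 < x -> ln x <= x.
Proof. intros hx. generalize (ln_1p_le (x - 1)). replace (1 + (x - 1)) with x; lra. Qed.

Lemma ln_1p_ge (u : R) : 0 <= u -> 2 * u / (2 + u) <= ln (1 + u).
Proof.
intros hu.
enough (0 - 2 * 0 / (2 + 0) <= ln (1 + u) - 2 * u / (2 + u)) by lra.
replace 0 with (ln (1 + 0)) at 1 by (rewrite Rplus_0_r; apply ln_1).
apply (le_of_derive_nonneg (fun x => ln (1 + x) - 2 * x / (2 + x))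
         (fun x => x ^ 2 / ((1 + x) * (2 + x) ^ 2))); [lra| |].
- intros x hx. auto_derive; [lra|]. field. lra.
- intros x hx. apply Rle_mult_inv_pos; [nra|].
  apply Rmult_lt_0_compat; [lra|nra].
Qed.

Lemma ln_ge_half_sub_inv (w : R) : 0 < w <= 1 -> (w - / w) / 2 <= ln w.
Proof.
intros hw.
enough ((w - / w) / 2 - ln w <= (1 - / 1) / 2 - ln 1) by (rewrite ln_1 in *; lra).
apply (le_of_derive_nonneg (fun x => (x - / x) / 2 - ln x)
         (fun x => (x - 1) ^ 2 / (2 * x ^ 2))); [lra| |].
- intros x hx. auto_derive; [lra|]. field. lra.
- intros x hx. apply Rle_mult_inv_pos; nra.
Qed.

(* The derivative of the difference is [t^3 / (1 + t)], which changes sign at 0. *)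
Lemma ln_1p_le_cubic (u : R) : -1 < u -> ln (1 + u) <= u - u ^ 2 / 2 + u ^ 3 / 3.
Proof.
intros hu.
set (g := fun t => t - t ^ 2 / 2 + t ^ 3 / 3 - ln (1 + t)).
assert (hg0 : g 0 = 0) by (unfold g; cbv beta; rewrite Rplus_0_r, ln_1; field).
enough (0 <= g u) by (unfold g in *; lra).
assert (Dg : forall t, -1 < t -> is_derive g t (t ^ 3 / (1 + t))).
{ intros t ht. unfold g. auto_derive; [lra|]. field. lra. }
destruct (Rle_dec 0 u) as [hp|hn].
- rewrite <- hg0. apply (le_of_derive_nonneg g (fun t => t ^ 3 / (1 + t))); [lra| |].
  + intros t ht. apply Dg. lra.
  + intros t ht. apply Rle_mult_inv_pos; [apply pow_le|]; lra.
- enough (- g u <= - g 0) by lra.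
  apply (le_of_derive_nonneg (fun t => - g t) (fun t => - (t ^ 3 / (1 + t)))); [lra| |].
  + intros t ht. apply (is_derive_opp g). apply Dg. lra.
  + intros t ht. replace (- (t ^ 3 / (1 + t))) with ((- t) * t ^ 2 / (1 + t)) by (field; lra).
    apply Rle_mult_inv_pos; [|lra]. apply Rmult_le_pos; nra.
Qed.

Definition bennett (u : R) : R := (1 + u) * ln (1 + u) - u.

Lemma bennett_ge_neg (u : R) : -1 < u <= 0 -> u ^ 2 / 2 <= bennett u.
Proof.
intros hu. unfold bennett.
assert (H := ln_ge_half_sub_inv (1 + u) ltac:(lra)).
assert ((1 + u) * ((1 + u - / (1 + u)) / 2) <= (1 + u) * ln (1 + u))
  by (apply Rmult_le_compat_l; lra).
replace ((1 + u) * ((1 + u - / (1 + u)) / 2)) with (u + u ^ 2 / 2) in * by (field; lra).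
lra.
Qed.

Lemma bennett_ge_pos (u : R) : 0 <= u -> u ^ 2 / (2 * (1 + u)) <= bennett u.
Proof.
intros hu. unfold bennett.
assert ((1 + u) * (2 * u / (2 + u)) <= (1 + u) * ln (1 + u))
  by (apply Rmult_le_compat_l; [lra|apply ln_1p_ge; lra]).
replace ((1 + u) * (2 * u / (2 + u))) with (u + u ^ 2 / (2 + u)) in * by (field; lra).
enough (u ^ 2 / (2 * (1 + u)) <= u ^ 2 / (2 + u)) by lra.
apply Rmult_le_compat_l; [nra|]. apply Rinv_le_contravar; lra.
Qed.

Lemma bennett_nonneg (u : R) : -1 < u -> 0 <= bennett u.
Proof.
intros hu. destruct (Rle_dec u 0).
- generalize (bennett_ge_neg u ltac:(lra)). nra.
- generalize (bennett_ge_pos u ltac:(lra)).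
  assert (0 <= u ^ 2 / (2 * (1 + u))) by (apply Rle_mult_inv_pos; nra). lra.
Qed.

Lemma bennett_sub_sq (u : R) : - / 2 <= u <= / 2 ->
  Rabs (bennett u - u ^ 2 / 2) <= Rabs u ^ 3.
Proof.
intros hu. apply Rabs_le.
assert (Hup := ln_1p_le_cubic u ltac:(lra)).
assert (bennett u <= u ^ 2 / 2 - u ^ 3 / 6 + u ^ 4 / 3).
{ unfold bennett.
  assert ((1 + u) * ln (1 + u) <= (1 + u) * (u - u ^ 2 / 2 + u ^ 3 / 3))
    by (apply Rmult_le_compat_l; lra).
  lra. }
destruct (Rle_dec 0 u) as [hp|hn].
- rewrite Rabs_pos_eq by lra.
  assert (Hlow := bennett_ge_pos u hp).
  assert (u ^ 2 / 2 - u ^ 3 <= u ^ 2 / (2 * (1 + u))).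
  { apply (Rmult_le_reg_r (2 * (1 + u))); [lra|].
    replace (u ^ 2 / (2 * (1 + u)) * (2 * (1 + u))) with (u ^ 2) by (field; lra). nra. }
  split; nra.
- rewrite Rabs_left by lra.
  assert (Hlow := bennett_ge_neg u ltac:(lra)).
  split; nra.
Qed.

(** * Stirling's formula *)

Definition stirling_err (k : nat) : R :=
  ln (INR (fact k)) - (INR k + / 2) * ln (INR k) + INR k.

Lemma stirling_err_step (k : nat) : (1 <= k)%nat ->
  0 <= stirling_err k - stirling_err (S k) <= / (2 * INR k) - / (2 * INR (S k)).
Proof.
intros hk. assert (hk' : 1 <= INR k) by (apply (le_INR 1); exact hk).
set (x := / INR k).
assert (hx : 0 < x <= 1).
{ split; [apply Rinv_0_lt_compat; lra|].
  rewrite <- Rinv_1. apply Rinv_le_contravar; lra. }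
assert (Ek : INR k = / x) by (unfold x; rewrite Rinv_inv; reflexivity).
assert (E : stirling_err k - stirling_err (S k) = (/ x + / 2) * ln (1 + x) - 1).
{ unfold stirling_err.
  rewrite fact_simpl, mult_INR, ln_mult by (first [apply INR_fact_lt_0 | apply lt_0_INR; lia]).
  rewrite S_INR, Ek.
  replace (/ x + 1) with (/ x * (1 + x)) by (field; lra).
  rewrite ln_mult by (apply Rinv_0_lt_compat || idtac; lra).
  field. lra. }
rewrite E, S_INR, Ek.
assert (0 < / x + / 2) by (assert (0 < / x) by (apply Rinv_0_lt_compat; lra); lra).
split.
- assert ((/ x + / 2) * (2 * x / (2 + x)) <= (/ x + / 2) * ln (1 + x))
    by (apply Rmult_le_compat_l; [lra|apply ln_1p_ge; lra]).
  replace ((/ x + / 2) * (2 * x / (2 + x))) with 1 in * by (field; lra).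
  lra.
- assert ((/ x + / 2) * ln (1 + x) <= (/ x + / 2) * (x - x ^ 2 / 2 + x ^ 3 / 3))
    by (apply Rmult_le_compat_l; [lra|apply ln_1p_le_cubic; lra]).
  replace ((/ x + / 2) * (x - x ^ 2 / 2 + x ^ 3 / 3)) with (1 + x ^ 2 / 12 + x ^ 3 / 6) in *
    by (field; lra).
  replace (/ (2 * / x) - / (2 * (/ x + 1))) with (x ^ 2 / (2 * (1 + x))) by (field; lra).
  apply (Rmult_le_reg_r (2 * (1 + x))); [lra|].
  replace (x ^ 2 / (2 * (1 + x)) * (2 * (1 + x))) with (x ^ 2) by (field; lra).
  assert (((/ x + / 2) * ln (1 + x) - 1) * (2 * (1 + x))
          <= (x ^ 2 / 12 + x ^ 3 / 6) * (2 * (1 + x))) by (apply Rmult_le_compat_r; lra).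
  assert ((1 + 2 * x) * (1 + x) <= 6) by nra.
  assert (0 <= x ^ 2) by nra.
  nra.
Qed.

Lemma stirling_err_decr (n : nat) : stirling_err (S (S n)) <= stirling_err (S n).
Proof. generalize (stirling_err_step (S n) ltac:(lia)). lra. Qed.

Lemma stirling_err_lower (n : nat) : / 2 + / (2 * INR (S n)) <= stirling_err (S n).
Proof.
induction n as [|n IH].
- unfold stirling_err. simpl. rewrite ln_1. lra.
- generalize (stirling_err_step (S n) ltac:(lia)). lra.
Qed.

Definition stirling_const : R := real (Lim_seq (fun n => stirling_err (S n))).

Lemma is_lim_seq_stirling_err : is_lim_seq stirling_err stirling_const.
Proof.
apply is_lim_seq_incr_1.
assert (Hex : ex_finite_lim_seq (fun n => stirling_err (S n))).
{ apply (ex_finite_lim_seq_decr _ (/ 2)); [apply stirling_err_decr|].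
  intros n. generalize (stirling_err_lower n).
  assert (0 < / (2 * INR (S n))) by (apply Rinv_0_lt_compat; rewrite S_INR; generalize (pos_INR n); lra).
  lra. }
destruct Hex as [L HL]. unfold stirling_const. rewrite (is_lim_seq_unique _ _ HL). exact HL.
Qed.

Lemma stirling_const_le (n : nat) : (1 <= n)%nat -> stirling_const <= stirling_err n.
Proof.
intros hn. replace n with (S (n - 1)) by lia.
apply (is_lim_seq_decr_compare (fun n => stirling_err (S n))).
- apply (is_lim_seq_incr_1 stirling_err). exact is_lim_seq_stirling_err.
- apply stirling_err_decr.
Qed.

Definition wallis (n : nat) : R := RInt (fun x => sin x ^ n) 0 (PI / 2).

Lemma ex_RInt_sin_pow (n : nat) : ex_RInt (fun x => sin x ^ n) 0 (PI / 2).
Proof.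
apply (ex_RInt_continuous (V := R_CompleteNormedModule)). intros x _.
apply (ex_derive_continuous (V := R_NormedModule)). auto_derive. exact I.
Qed.

Lemma wallis_0 : wallis 0 = PI / 2.
Proof. unfold wallis. simpl. rewrite RInt_const. unfold scal; simpl. unfold mult; simpl. ring. Qed.

Lemma wallis_1 : wallis 1 = 1.
Proof.
unfold wallis. apply is_RInt_unique.
replace 1 with (minus (- cos (PI / 2)) (- cos 0))
  by (rewrite cos_PI2, cos_0; unfold minus, plus, opp; simpl; ring).
apply (is_RInt_derive (fun x => - cos x)).
- intros x _. auto_derive; [exact I|ring].
- intros x _. apply (ex_derive_continuous (V := R_NormedModule)). auto_derive. exact I.
Qed.

Lemma wallis_rec (n : nat) : INR (n + 2) * wallis (n + 2) = INR (n + 1) * wallis n.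
Proof.
set (F := fun x => - cos x * sin x ^ (n + 1)).
set (f := fun x => INR (n + 2) * sin x ^ (n + 2) - INR (n + 1) * sin x ^ n).
assert (Hparts : is_RInt f 0 (PI / 2) (minus (F (PI / 2)) (F 0))).
{ apply (is_RInt_derive F).
  - intros x _. unfold F, f. auto_derive; [exact I|].
    replace (n + 2)%nat with (S (S n)) by lia. replace (n + 1)%nat with (S n) by lia.
    rewrite !S_INR. simpl pred. simpl pow.
    assert (E := sin2_cos2 x). unfold Rsqr in E.
    match goal with |- ?L = ?R =>
      assert (L - R = (INR n + 1) * sin x ^ n * (1 - (sin x * sin x + cos x * cos x))) by ring
    end.
    rewrite E in H. lra.
  - intros x _. unfold f. apply (ex_derive_continuous (V := R_NormedModule)).
    auto_derive. exact I. }
assert (Hlin : is_RInt f 0 (PI / 2) (INR (n + 2) * wallis (n + 2) - INR (n + 1) * wallis n)).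
{ exact (is_RInt_minus (V := R_NormedModule) _ _ _ _ _ _
    (is_RInt_scal _ _ _ (INR (n + 2)) _ (RInt_correct _ _ _ (ex_RInt_sin_pow (n + 2))))
    (is_RInt_scal _ _ _ (INR (n + 1)) _ (RInt_correct _ _ _ (ex_RInt_sin_pow n)))). }
assert (E := is_RInt_unique _ _ _ _ Hparts). rewrite (is_RInt_unique _ _ _ _ Hlin) in E.
unfold F, minus, plus, opp in E; simpl in E.
rewrite cos_PI2, sin_0, pow_i in E by lia. lra.
Qed.

Lemma wallis_decr (n : nat) : wallis (S n) <= wallis n.
Proof.
generalize PI_RGT_0; intros hPI.
unfold wallis. apply RInt_le; [lra|apply ex_RInt_sin_pow|apply ex_RInt_sin_pow|].
intros x hx.
assert (0 <= sin x) by (apply sin_ge_0; lra).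
assert (sin x <= 1) by apply SIN_bound.
assert (0 <= sin x ^ n) by (apply pow_le; lra).
simpl. nra.
Qed.

Lemma wallis_nonneg (n : nat) : 0 <= wallis n.
Proof.
generalize PI_RGT_0; intros hPI.
replace 0 with (RInt (fun _ => 0) 0 (PI / 2))
  by (rewrite RInt_const; unfold scal; simpl; unfold mult; simpl; ring).
apply RInt_le; [lra|apply ex_RInt_const|apply ex_RInt_sin_pow|].
intros x hx. apply pow_le, sin_ge_0; lra.
Qed.

Lemma wallis_prod (n : nat) : INR (n + 1) * wallis (n + 1) * wallis n = PI / 2.
Proof.
induction n as [|n IH].
- simpl. rewrite wallis_1, wallis_0. ring.
- replace (S n + 1)%nat with (n + 2)%nat by lia. rewrite wallis_rec.
  replace (S n) with (n + 1)%nat by lia. rewrite <- IH. ring.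
Qed.

Definition central_binom_ratio (m : nat) : R :=
  INR (fact (2 * m)) / (INR (fact m) ^ 2 * 4 ^ m).

Lemma central_binom_ratio_pos (m : nat) : 0 < central_binom_ratio m.
Proof.
apply Rdiv_lt_0_compat; [apply INR_fact_lt_0|].
apply Rmult_lt_0_compat; apply pow_lt; [apply INR_fact_lt_0|lra].
Qed.

Lemma wallis_even (m : nat) : wallis (2 * m) = central_binom_ratio m * (PI / 2).
Proof.
induction m as [|m IH].
- change (2 * 0)%nat with 0%nat. rewrite wallis_0. unfold central_binom_ratio. simpl. field.
- assert (Rec := wallis_rec (2 * m)).
  replace (2 * m + 2)%nat with (2 * S m)%nat in Rec by lia.
  rewrite IH in Rec. unfold central_binom_ratio in *.
  replace (2 * S m)%nat with (S (S (2 * m))) in * by lia.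
  rewrite !fact_simpl, !mult_INR, !S_INR, plus_INR, mult_INR in *.
  simpl (INR 2) in *. simpl (INR 1) in *. simpl pow in *.
  assert (0 < INR (fact m)) by apply INR_fact_lt_0.
  assert (0 < INR (fact (2 * m))) by apply INR_fact_lt_0.
  assert (0 <= INR m) by apply pos_INR.
  assert (0 < 4 ^ m) by (apply pow_lt; lra).
  apply (Rmult_eq_reg_l ((1 + 1) * INR m + 1 + 1)); [rewrite Rec; field; lra|lra].
Qed.

(* Squeeze [wallis (2 m)] between [wallis (2 m + 1)] and [wallis (2 m - 1)]: its products with
   both are known from [wallis_prod]. *)
Lemma central_binom_ratio_bounds (m : nat) : (1 <= m)%nat ->
  2 * INR m / (PI * (2 * INR m + 1)) <= central_binom_ratio m ^ 2 * INR m <= / PI.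
Proof.
intros hm. assert (hm' : 1 <= INR m) by (apply (le_INR 1); exact hm).
generalize PI_RGT_0; intros hPI.
assert (P1 := wallis_prod (2 * m)). assert (P2 := wallis_prod (2 * m - 1)).
assert (D1 := wallis_decr (2 * m)). assert (D2 := wallis_decr (2 * m - 1)).
assert (G1 := wallis_nonneg (S (2 * m))). assert (G0 := wallis_nonneg (2 * m)).
replace (2 * m - 1 + 1)%nat with (2 * m)%nat in P2 by lia.
replace (S (2 * m - 1)) with (2 * m)%nat in D2 by lia.
replace (2 * m + 1)%nat with (S (2 * m)) in P1 by lia.
rewrite wallis_even in *. rewrite S_INR, mult_INR in P1. rewrite mult_INR in P2.
replace (INR 2) with 2 in * by (simpl; lra).
assert (c := central_binom_ratio_pos m).
set (w := central_binom_ratio m) in *.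
set (a := wallis (S (2 * m))) in *. set (b := wallis (2 * m - 1)) in *.
assert (Ea : w * (PI / 2) * a = PI / (2 * (2 * INR m + 1))).
{ apply (Rmult_eq_reg_l (2 * INR m + 1)); [|lra].
  replace ((2 * INR m + 1) * (w * (PI / 2) * a)) with ((2 * INR m + 1) * a * (w * (PI / 2)))
    by ring.
  rewrite P1. field. lra. }
assert (Eb : w * (PI / 2) * b = PI / (2 * (2 * INR m))).
{ apply (Rmult_eq_reg_l (2 * INR m)); [|lra].
  replace (2 * INR m * (w * (PI / 2) * b)) with (2 * INR m * (w * (PI / 2)) * b) by ring.
  rewrite P2. field. lra. }
assert (0 <= w * (PI / 2)) by nra.
split; apply (Rmult_le_reg_r (PI ^ 2 / 4)); try nra.
- replace (2 * INR m / (PI * (2 * INR m + 1)) * (PI ^ 2 / 4))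
    with (INR m * (w * (PI / 2) * a)) by (rewrite Ea; field; lra).
  replace (w ^ 2 * INR m * (PI ^ 2 / 4)) with (INR m * (w * (PI / 2) * (w * (PI / 2)))) by field.
  apply Rmult_le_compat_l; [lra|]. apply Rmult_le_compat_l; lra.
- replace (/ PI * (PI ^ 2 / 4)) with (INR m * (w * (PI / 2) * b)) by (rewrite Eb; field; lra).
  replace (w ^ 2 * INR m * (PI ^ 2 / 4)) with (INR m * (w * (PI / 2) * (w * (PI / 2)))) by field.
  apply Rmult_le_compat_l; [lra|]. apply Rmult_le_compat_l; lra.
Qed.

Lemma ln_central_binom_ratio (m : nat) : (1 <= m)%nat ->
  ln (central_binom_ratio m ^ 2 * INR m)
  = 2 * stirling_err (2 * m) - 4 * stirling_err m + ln 2.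
Proof.
intros hm. assert (hm' : 1 <= INR m) by (apply (le_INR 1); exact hm).
assert (F1 := INR_fact_lt_0 m). assert (F2 := INR_fact_lt_0 (2 * m)).
assert (C := central_binom_ratio_pos m).
rewrite ln_mult, ln_pow by (try apply pow_lt; lra).
unfold central_binom_ratio, stirling_err.
rewrite ln_div, ln_mult, !ln_pow by (try apply Rmult_lt_0_compat; try apply pow_lt; lra).
rewrite mult_INR. replace (INR 2) with 2 by (simpl; lra).
rewrite ln_mult by lra. replace 4 with (2 * 2) by ring. rewrite ln_mult by lra.
field.
Qed.

Lemma is_lim_seq_scal_INR (a : R) : 0 < a -> is_lim_seq (fun n => a * INR n) p_infty.
Proof.
intros ha.
replace p_infty with (Rbar_mult a p_infty)
  by (apply is_Rbar_mult_unique, is_Rbar_mult_sym, is_Rbar_mult_p_infty_pos; exact ha).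
apply is_lim_seq_scal_l, is_lim_seq_INR.
Qed.

Lemma is_lim_seq_inv_affine (a : R) : 0 < a -> is_lim_seq (fun n => / (a * INR n + 1)) 0.
Proof.
intros ha. replace (Finite 0) with (Rbar_inv p_infty) by reflexivity.
apply is_lim_seq_inv; [|discriminate].
apply (is_lim_seq_le_p_loc (fun n => a * INR n)); [|apply is_lim_seq_scal_INR, ha].
exists 0%nat. intros n _. lra.
Qed.

Lemma stirling_const_eq : stirling_const = ln (2 * PI) / 2.
Proof.
generalize PI_RGT_0; intros hPI.
assert (Lw : is_lim_seq (fun j => central_binom_ratio (S j) ^ 2 * INR (S j)) (/ PI)).
{ apply (is_lim_seq_le_le (fun j => / PI - / PI * / (2 * INR (S j) + 1)) _ (fun _ => / PI)).
  - intros j. assert (B := central_binom_ratio_bounds (S j) ltac:(lia)).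
    assert (0 < INR (S j)) by (apply lt_0_INR; lia).
    replace (/ PI - / PI * / (2 * INR (S j) + 1))
      with (2 * INR (S j) / (PI * (2 * INR (S j) + 1))) by (field; lra).
    exact B.
  - replace (Finite (/ PI)) with (Finite (/ PI - / PI * 0)) by (f_equal; ring).
    apply is_lim_seq_minus'; [apply is_lim_seq_const|].
    apply (is_lim_seq_scal_l _ _ (Finite 0)).
    apply (is_lim_seq_incr_1 (fun n => / (2 * INR n + 1))), is_lim_seq_inv_affine. lra.
  - apply is_lim_seq_const. }
assert (Lln : is_lim_seq (fun j => ln (central_binom_ratio (S j) ^ 2 * INR (S j))) (ln (/ PI))).
{ apply (is_lim_seq_continuous ln); [|exact Lw].
  apply continuity_pt_filterlim, continuous_ln, Rinv_0_lt_compat, hPI. }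
assert (Lst : is_lim_seq (fun j => ln (central_binom_ratio (S j) ^ 2 * INR (S j)))
                (2 * stirling_const - 4 * stirling_const + ln 2)).
{ apply (is_lim_seq_ext (fun j => 2 * stirling_err (2 * S j) - 4 * stirling_err (S j) + ln 2)).
  { intros j. symmetry. apply ln_central_binom_ratio. lia. }
  apply is_lim_seq_plus'; [|apply is_lim_seq_const].
  apply is_lim_seq_minus'; apply (is_lim_seq_scal_l _ _ (Finite stirling_const)).
  - apply (is_lim_seq_subseq stirling_err _ (fun j => 2 * S j)%nat); [|exact is_lim_seq_stirling_err].
    intros P [N HN]. exists N. intros n hn. apply HN. lia.
  - apply (is_lim_seq_incr_1 stirling_err), is_lim_seq_stirling_err. }
assert (U := is_lim_seq_unique _ _ Lln). rewrite (is_lim_seq_unique _ _ Lst) in U.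
injection U as U. rewrite ln_Rinv in U by lra. rewrite ln_mult by lra. lra.
Qed.

Lemma exp_neg_stirling_const : exp (- stirling_const) = / sqrt (2 * PI).
Proof.
generalize PI_RGT_0; intros hPI.
rewrite stirling_const_eq, exp_Ropp, sqrt_exp_ln by lra. reflexivity.
Qed.

Lemma stirling_const_nonneg : 0 <= stirling_const.
Proof.
rewrite stirling_const_eq. assert (2 < PI) by (generalize PI2_1; lra).
assert (0 < ln (2 * PI)) by (rewrite <- ln_1; apply ln_increasing; lra). lra.
Qed.

(** * The local limit theorem for the Poisson distribution *)

Definition poisson (l : R) (k : Z) : R :=
  if (k <? 0)%Z then 0 else l ^ Z.to_nat k * exp (- l) / INR (fact (Z.to_nat k)).

Lemma INR_Z_to_nat (k : Z) : (0 <= k)%Z -> INR (Z.to_nat k) = IZR k.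
Proof. intros hk. rewrite INR_IZR_INZ, Z2Nat.id by exact hk. reflexivity. Qed.

Lemma sqrt_poisson_eq (l : R) (k : Z) : 0 < l -> (1 <= k)%Z ->
  sqrt l * poisson l k
  = exp (- ln (1 + (IZR k - l) / l) / 2 - stirling_err (Z.to_nat k)
         - l * bennett ((IZR k - l) / l)).
Proof.
intros hl hk.
unfold poisson. destruct (Z.ltb_spec k 0) as [|_]; [lia|].
rewrite <- (INR_Z_to_nat k) by lia.
set (K := Z.to_nat k).
assert (hK : 1 <= INR K) by (apply (le_INR 1); unfold K; lia).
assert (F := INR_fact_lt_0 K).
rewrite <- (exp_ln (sqrt l * _))
  by (apply Rmult_lt_0_compat; [apply sqrt_lt_R0; lra|];
      apply Rdiv_lt_0_compat; [apply Rmult_lt_0_compat; [apply pow_lt|apply exp_pos]|]; lra).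
f_equal.
rewrite ln_mult, ln_div, ln_mult, ln_pow, ln_exp
  by (try apply sqrt_lt_R0; try apply Rdiv_lt_0_compat; try apply Rmult_lt_0_compat;
      try apply pow_lt; try apply exp_pos; lra).
rewrite sqrt_exp_ln, ln_exp by lra.
unfold bennett, stirling_err.
replace (1 + (INR K - l) / l) with (INR K / l) by (field; lra).
rewrite ln_div by lra.
field. lra.
Qed.

Lemma is_lim_seq_sqrt_p_infty (l : nat -> R) :
  is_lim_seq l p_infty -> is_lim_seq (fun n => sqrt (l n)) p_infty.
Proof.
intros hl. apply is_lim_seq_spec. intros M.
apply is_lim_seq_spec in hl.
apply (filter_imp (fun n => Rmax M 0 ^ 2 < l n)); [|apply hl].
intros n hn.
assert (sqrt (Rmax M 0 ^ 2) < sqrt (l n)) by (apply sqrt_lt_1_alt; split; [apply pow2_ge_0|exact hn]).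
rewrite sqrt_pow2 in H by apply Rmax_r.
generalize (Rmax_l M 0). lra.
Qed.

Lemma is_lim_seq_inv_sqrt (l : nat -> R) :
  is_lim_seq l p_infty -> is_lim_seq (fun n => / sqrt (l n)) 0.
Proof.
intros hl. replace (Finite 0) with (Rbar_inv p_infty) by reflexivity.
apply is_lim_seq_inv; [apply is_lim_seq_sqrt_p_infty, hl|discriminate].
Qed.

Lemma eventually_pos (l : nat -> R) : is_lim_seq l p_infty -> eventually (fun n => 0 < l n).
Proof. intros hl. apply is_lim_seq_spec in hl. apply hl. Qed.

Lemma is_lim_seq_comp_Z_to_nat (u : nat -> R) (L : Rbar) (k : nat -> Z) :
  is_lim_seq u L -> is_lim_seq (fun n => IZR (k n)) p_infty ->
  is_lim_seq (fun n => u (Z.to_nat (k n))) L.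
Proof.
intros hu hk. apply (is_lim_seq_subseq u L (fun n => Z.to_nat (k n))); [|exact hu].
intros P [N HN]. apply is_lim_seq_spec in hk. unfold filtermap.
apply (filter_imp (fun n => IZR (Z.of_nat N) < IZR (k n))); [|apply (hk (IZR (Z.of_nat N)))].
intros n hn. apply HN. apply lt_IZR in hn. lia.
Qed.

(* [s ^ 2 |bennett u - u ^ 2 / 2| <= s ^ 2 |u| ^ 3 = (s u) ^ 2 |u|], which tends to 0. *)
Lemma is_lim_seq_scaled_bennett (s u : nat -> R) (y : R) :
  is_lim_seq u 0 -> is_lim_seq (fun n => s n * u n) y ->
  is_lim_seq (fun n => s n ^ 2 * bennett (u n)) (y ^ 2 / 2).
Proof.
intros hu hsu.
set (err := fun n => (s n * u n) ^ 2 * Rabs (u n)).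
assert (Herr : is_lim_seq err 0).
{ replace (Finite 0) with (Finite (y ^ 2 * Rabs 0)) by (rewrite Rabs_R0; f_equal; ring).
  apply is_lim_seq_mult'.
  - apply (is_lim_seq_continuous (fun t => t ^ 2)); [|exact hsu].
    apply continuity_pt_filterlim, (ex_derive_continuous (V := R_NormedModule)). auto_derive. exact I.
  - apply (is_lim_seq_continuous Rabs); [apply continuity_pt_filterlim, continuous_Rabs|exact hu]. }
assert (Hsq : is_lim_seq (fun n => (s n * u n) ^ 2 / 2) (y ^ 2 / 2)).
{ apply (is_lim_seq_scal_r _ (/ 2) (Finite (y ^ 2))).
  apply (is_lim_seq_continuous (fun t => t ^ 2)); [|exact hsu].
  apply continuity_pt_filterlim, (ex_derive_continuous (V := R_NormedModule)). auto_derive. exact I. }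
apply (is_lim_seq_le_le_loc (fun n => (s n * u n) ^ 2 / 2 - err n) _
                            (fun n => (s n * u n) ^ 2 / 2 + err n)).
- apply is_lim_seq_spec in hu.
  apply (filter_imp (fun n => Rabs (u n - 0) < / 2)); [|apply (hu (mkposreal (/ 2) ltac:(lra)))].
  intros n hn. rewrite Rminus_0_r in hn. apply Rabs_def2 in hn.
  assert (B := bennett_sub_sq (u n) ltac:(lra)). apply Rabs_le_between in B.
  assert (E : (s n * u n) ^ 2 * Rabs (u n) = s n ^ 2 * Rabs (u n) ^ 3).
  { replace ((s n * u n) ^ 2) with (s n ^ 2 * Rabs (u n) ^ 2) by (rewrite pow2_abs; ring).
    ring. }
  assert (0 <= s n ^ 2) by apply pow2_ge_0.
  unfold err. rewrite E. split; nra.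
- replace (y ^ 2 / 2) with (y ^ 2 / 2 - 0) by ring. apply is_lim_seq_minus'; assumption.
- replace (y ^ 2 / 2) with (y ^ 2 / 2 + 0) by ring. apply is_lim_seq_plus'; assumption.
Qed.

Lemma div_sqrt_eq (l t : R) : 0 < l -> t / sqrt l = sqrt l * (t / l).
Proof.
intros hl. assert (0 < sqrt l) by (apply sqrt_lt_R0, hl).
assert (hss : sqrt l * sqrt l = l) by (apply sqrt_sqrt; lra).
set (s := sqrt l) in *. rewrite <- hss. field. lra.
Qed.

Lemma is_lim_seq_rel_dev (l : nat -> R) (k : nat -> Z) (y : R) :
  is_lim_seq l p_infty ->
  is_lim_seq (fun n => (IZR (k n) - l n) / sqrt (l n)) y ->
  is_lim_seq (fun n => (IZR (k n) - l n) / l n) 0.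
Proof.
intros hl hx.
apply (is_lim_seq_ext_loc (fun n => (IZR (k n) - l n) / sqrt (l n) * / sqrt (l n))).
- apply (filter_imp (fun n => 0 < l n)); [|apply eventually_pos, hl].
  intros n hn. assert (0 < sqrt (l n)) by (apply sqrt_lt_R0; exact hn).
  rewrite div_sqrt_eq by exact hn. field. lra.
- replace (Finite 0) with (Finite (y * 0)) by (f_equal; ring).
  apply is_lim_seq_mult'; [exact hx|apply is_lim_seq_inv_sqrt, hl].
Qed.

Lemma is_lim_seq_index_p_infty (l : nat -> R) (k : nat -> Z) (y : R) :
  is_lim_seq l p_infty ->
  is_lim_seq (fun n => (IZR (k n) - l n) / sqrt (l n)) y ->
  is_lim_seq (fun n => IZR (k n)) p_infty.
Proof.
intros hl hx.
apply (is_lim_seq_ext_loc (fun n => l n * (1 + (IZR (k n) - l n) / l n))).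
{ apply (filter_imp (fun n => 0 < l n)); [|apply eventually_pos, hl].
  intros n hn. field. lra. }
apply (is_lim_seq_mult _ _ p_infty 1); [exact hl| |].
- replace (Finite 1) with (Finite (1 + 0)) by (f_equal; ring).
  apply is_lim_seq_plus'; [apply is_lim_seq_const|apply (is_lim_seq_rel_dev l k y hl hx)].
- apply is_Rbar_mult_p_infty_pos. simpl; lra.
Qed.

Theorem is_lim_seq_sqrt_poisson (l : nat -> R) (k : nat -> Z) (y : R) :
  is_lim_seq l p_infty ->
  is_lim_seq (fun n => (IZR (k n) - l n) / sqrt (l n)) y ->
  is_lim_seq (fun n => sqrt (l n) * poisson (l n) (k n)) (gauss y).
Proof.
intros hl hx.
set (u := fun n => (IZR (k n) - l n) / l n).
assert (Hu : is_lim_seq u 0) by exact (is_lim_seq_rel_dev l k y hl hx).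
assert (Hk := is_lim_seq_index_p_infty l k y hl hx).
assert (Hexp : is_lim_seq (fun n => - ln (1 + u n) / 2 - stirling_err (Z.to_nat (k n))
                                    - l n * bennett (u n))
                 (- ln (1 + 0) / 2 - stirling_const - y ^ 2 / 2)).
{ apply is_lim_seq_minus'; [apply is_lim_seq_minus'|].
  - apply (is_lim_seq_continuous (fun t => - ln (1 + t) / 2)); [|exact Hu].
    apply continuity_pt_filterlim.
    apply (ex_derive_continuous (V := R_NormedModule) (fun t => - ln (1 + t) / 2)).
    auto_derive. lra.
  - apply is_lim_seq_comp_Z_to_nat; [exact is_lim_seq_stirling_err|exact Hk].
  - apply (is_lim_seq_ext_loc (fun n => sqrt (l n) ^ 2 * bennett (u n))).
    { apply (filter_imp (fun n => 0 < l n)); [|apply eventually_pos, hl].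
      intros n hn. rewrite pow2_sqrt by lra. reflexivity. }
    apply is_lim_seq_scaled_bennett; [exact Hu|].
    apply (is_lim_seq_ext_loc (fun n => (IZR (k n) - l n) / sqrt (l n))); [|exact hx].
    apply (filter_imp (fun n => 0 < l n)); [|apply eventually_pos, hl].
    intros n hn. apply div_sqrt_eq, hn. }
apply (is_lim_seq_ext_loc (fun n => exp (- ln (1 + u n) / 2 - stirling_err (Z.to_nat (k n))
                                         - l n * bennett (u n)))).
- assert (Hk1 : eventually (fun n => 1 <= k n)%Z).
  { apply is_lim_seq_spec in Hk. apply (filter_imp (fun n => 0 < IZR (k n))); [|apply Hk].
    intros n hn. apply lt_IZR in hn. lia. }
  apply (filter_imp _ _ (fun n h => eq_sym (sqrt_poisson_eq (l n) (k n) (proj1 h) (proj2 h)))).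
  apply filter_and; [apply eventually_pos, hl|exact Hk1].
- replace (gauss y) with (exp (- ln (1 + 0) / 2 - stirling_const - y ^ 2 / 2)).
  + apply (is_lim_seq_continuous exp); [|exact Hexp].
    apply continuity_pt_filterlim, (ex_derive_continuous (V := R_NormedModule)). auto_derive. exact I.
  + unfold gauss. rewrite Rplus_0_r, ln_1, <- exp_neg_stirling_const, <- exp_plus.
    f_equal. field.
Qed.

(** * Finite differences of the Poisson weights *)

Fixpoint poisson_diff (l : R) (a : nat) (k : Z) : R :=
  match a with
  | O => poisson l k
  | S a' => poisson_diff l a' (k + 1) - poisson_diff l a' k
  end.

Lemma poisson_succ (l : R) (k : Z) : (IZR k + 1) * poisson l (k + 1) = l * poisson l k.
Proof.
unfold poisson.
destruct (Z.ltb_spec (k + 1) 0); destruct (Z.ltb_spec k 0); try lia.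
- ring.
- replace k with (-1)%Z by lia. simpl. ring.
- replace (Z.to_nat (k + 1)) with (S (Z.to_nat k)) by lia.
  rewrite fact_simpl, mult_INR, S_INR, INR_Z_to_nat by lia.
  assert (0 < INR (fact (Z.to_nat k))) by apply INR_fact_lt_0.
  assert (0 <= IZR k) by (apply IZR_le; lia).
  simpl pow. field. lra.
Qed.

(* The [a]-th difference of [poisson_succ], by the Leibniz rule for differences of [k * p k]. *)
Lemma poisson_diff_rec (l : R) (a : nat) (k : Z) :
  (IZR k + 1) * poisson_diff l a (k + 1) + INR a * poisson_diff l (pred a) (k + 2)
  = l * poisson_diff l a k.
Proof.
revert k. induction a as [|a IH]; intros k.
- simpl. rewrite poisson_succ. ring.
- simpl poisson_diff. simpl pred.
  assert (E1 := IH k). assert (E2 := IH (k + 1)%Z).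
  replace (k + 1 + 1)%Z with (k + 2)%Z in * by lia.
  replace (k + 1 + 2)%Z with (k + 3)%Z in E2 by lia.
  rewrite plus_IZR in E2.
  assert (F : INR a * poisson_diff l (pred a) (k + 3)
              = INR a * poisson_diff l (pred a) (k + 2) + INR a * poisson_diff l a (k + 2)).
  { destruct a as [|a']; [simpl; ring|].
    simpl pred. simpl poisson_diff. replace (k + 2 + 1)%Z with (k + 3)%Z by lia. ring. }
  rewrite S_INR, (Rmult_minus_distr_l l), <- E1, <- E2, F. ring.
Qed.

Definition scaled_diff (l : R) (a : nat) (k : Z) : R := sqrt l ^ S a * poisson_diff l a k.

Lemma scaled_diff_rec (l : R) (a : nat) (k : Z) : 0 < l ->
  scaled_diff l (S a) k
  = scaled_diff l a (k + 1) * ((l - IZR k - 1) / sqrt l) - INR a * scaled_diff l (pred a) (k + 2).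
Proof.
intros hl. unfold scaled_diff. simpl poisson_diff.
assert (hs : 0 < sqrt l) by (apply sqrt_lt_R0; exact hl).
assert (hss : sqrt l * sqrt l = l) by (apply sqrt_sqrt; lra).
replace (poisson_diff l a k)
  with (((IZR k + 1) * poisson_diff l a (k + 1) + INR a * poisson_diff l (pred a) (k + 2)) / l)
  by (rewrite poisson_diff_rec; field; lra).
set (s := sqrt l) in *. clearbody s. subst l.
destruct a as [|a']; simpl pred; simpl pow; [simpl INR|rewrite S_INR]; field; lra.
Qed.

Lemma Int_part_add_1 (r : R) : Int_part (r + 1) = (Int_part r + 1)%Z.
Proof.
symmetry. apply Int_part_spec. rewrite plus_IZR.
destruct (base_Int_part r). lra.
Qed.

Lemma lam_pos (d n : nat) : (1 <= d)%nat -> (1 <= n)%nat -> 0 < lam d n.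
Proof. intros hd hn. apply Rdiv_lt_0_compat; apply lt_0_INR; lia. Qed.

Lemma step_eq (d n : nat) : (1 <= d)%nat -> (1 <= n)%nat -> step d n = / sqrt (lam d n).
Proof.
intros hd hn. unfold step, lam.
assert (0 < INR d) by (apply lt_0_INR; lia). assert (0 < INR n) by (apply lt_0_INR; lia).
rewrite <- sqrt_inv. f_equal. field. lra.
Qed.

(* One step of [Delta d n] moves the index [k] of the constancy interval of [f_n] by exactly 1. *)
Lemma Delta_iter_f_n (d n a : nat) (y : R) : (1 <= d)%nat -> (1 <= n)%nat ->
  Delta_iter d n a (f_n d n) y
  = scaled_diff (lam d n) a (Int_part (y * sqrt (lam d n) + lam d n)).
Proof.
intros hd hn. assert (hl := lam_pos d n hd hn).
assert (hs : 0 < sqrt (lam d n)) by (apply sqrt_lt_R0; exact hl).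
revert y. induction a as [|a IH]; intros y.
- change (Delta_iter d n 0 (f_n d n) y) with (f_n d n y).
  unfold f_n, scaled_diff. simpl poisson_diff. unfold poisson. cbv zeta.
  destruct (Int_part (y * sqrt (lam d n) + lam d n) <? 0)%Z; ring.
- simpl Delta_iter. unfold Defs.Delta. rewrite !IH, step_eq by assumption.
  replace ((y + / sqrt (lam d n)) * sqrt (lam d n) + lam d n)
    with (y * sqrt (lam d n) + lam d n + 1) by (field; lra).
  rewrite Int_part_add_1. unfold scaled_diff. simpl poisson_diff. simpl pow. field. lra.
Qed.

(** * Convergence to the derivatives of the Gaussian *)

Lemma is_derive_gauss (y : R) : is_derive gauss y (- y * gauss y).
Proof.
unfold gauss. assert (0 < sqrt (2 * PI)) by (apply sqrt_lt_R0; generalize PI_RGT_0; lra).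
auto_derive; [exact I|]. unfold Rdiv. simpl. field. lra.
Qed.

Lemma Derive_n_gauss_rec (a : nat) :
  (forall y, ex_derive (Derive_n gauss a) y) /\
  (forall y, Derive_n gauss (S a) y
             = - y * Derive_n gauss a y - INR a * Derive_n gauss (pred a) y).
Proof.
induction a as [a IH] using lt_wf_ind. destruct a as [|a].
- split; intros y.
  + exists (- y * gauss y). apply is_derive_gauss.
  + change (Derive_n gauss 1 y) with (Derive gauss y).
    rewrite (is_derive_unique _ _ _ (is_derive_gauss y)). simpl. ring.
- destruct (IH a ltac:(lia)) as [Ea Ra]. destruct (IH (pred a) ltac:(lia)) as [Epa _].
  assert (D : forall y, is_derive (Derive_n gauss (S a)) y
                (- Derive_n gauss a y - y * Derive_n gauss (S a) y
                 - INR a * Derive_n gauss (S (pred a)) y)).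
  { intros y. apply (is_derive_ext (fun t => - t * Derive_n gauss a t
                                             - INR a * Derive_n gauss (pred a) t)).
    { intros t. symmetry. apply Ra. }
    destruct (Ea y) as [da Hda]. destruct (Epa y) as [dpa Hdpa].
    replace (Derive_n gauss (S a) y) with da by (symmetry; apply is_derive_unique, Hda).
    replace (Derive_n gauss (S (pred a)) y) with dpa by (symmetry; apply is_derive_unique, Hdpa).
    apply (is_derive_minus (fun t => - t * Derive_n gauss a t)); [|apply is_derive_scal, Hdpa].
    replace (- Derive_n gauss a y - y * da) with (-1 * Derive_n gauss a y + - y * da) by ring.
    apply (is_derive_mult (fun t => - t)); [|exact Hda|intros; apply Rmult_comm].
    auto_derive; [exact I|ring]. }
  split; intros y.
  + eexists. apply D.
  + change (Derive_n gauss (S (S a)) y) with (Derive (Derive_n gauss (S a)) y).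
    rewrite (is_derive_unique _ _ _ (D y)).
    destruct a as [|a']; simpl pred; [simpl INR; ring|].
    rewrite !S_INR. ring.
Qed.

Lemma is_lim_seq_index_shift (l : nat -> R) (k : nat -> Z) (y : R) (j : Z) :
  is_lim_seq l p_infty ->
  is_lim_seq (fun n => (IZR (k n) - l n) / sqrt (l n)) y ->
  is_lim_seq (fun n => (IZR (k n + j) - l n) / sqrt (l n)) y.
Proof.
intros hl hx.
apply (is_lim_seq_ext_loc (fun n => (IZR (k n) - l n) / sqrt (l n) + IZR j * / sqrt (l n))).
- apply (filter_imp (fun n => 0 < l n)); [|apply eventually_pos, hl].
  intros n hn. assert (0 < sqrt (l n)) by (apply sqrt_lt_R0; exact hn).
  rewrite plus_IZR. field. lra.
- replace (Finite y) with (Finite (y + IZR j * 0)) by (f_equal; ring).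
  apply is_lim_seq_plus'; [exact hx|].
  apply (is_lim_seq_scal_l _ _ (Finite 0)), is_lim_seq_inv_sqrt, hl.
Qed.

(* [scaled_diff_rec] is a discrete form of the recurrence [Derive_n_gauss_rec]. *)
Theorem is_lim_seq_scaled_diff (l : nat -> R) (a : nat) : is_lim_seq l p_infty ->
  forall (k : nat -> Z) (y : R),
  is_lim_seq (fun n => (IZR (k n) - l n) / sqrt (l n)) y ->
  is_lim_seq (fun n => scaled_diff (l n) a (k n)) (Derive_n gauss a y).
Proof.
intros hl. induction a as [a IH] using lt_wf_ind. intros k y hk.
destruct a as [|a].
- apply (is_lim_seq_ext (fun n => sqrt (l n) * poisson (l n) (k n))).
  { intros n. unfold scaled_diff. simpl. ring. }
  apply is_lim_seq_sqrt_poisson; assumption.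
- assert (L1 := IH a ltac:(lia) _ _ (is_lim_seq_index_shift l k y 1 hl hk)).
  assert (L2 := IH (pred a) ltac:(lia) _ _ (is_lim_seq_index_shift l k y 2 hl hk)).
  assert (L3 : is_lim_seq (fun n => (l n - IZR (k n) - 1) / sqrt (l n)) (- y)).
  { apply (is_lim_seq_ext_loc (fun n => - ((IZR (k n + 1) - l n) / sqrt (l n)))).
    - apply (filter_imp (fun n => 0 < l n)); [|apply eventually_pos, hl].
      intros n hn. assert (0 < sqrt (l n)) by (apply sqrt_lt_R0; exact hn).
      rewrite plus_IZR. field. lra.
    - apply (is_lim_seq_opp _ (Finite y)), is_lim_seq_index_shift; assumption. }
  rewrite (proj2 (Derive_n_gauss_rec a)).
  replace (- y * Derive_n gauss a y - INR a * Derive_n gauss (pred a) y)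
    with (Derive_n gauss a y * - y - INR a * Derive_n gauss (pred a) y) by ring.
  apply (is_lim_seq_ext_loc (fun n => scaled_diff (l n) a (k n + 1) * ((l n - IZR (k n) - 1) / sqrt (l n))
                                      - INR a * scaled_diff (l n) (pred a) (k n + 2))).
  + apply (filter_imp (fun n => 0 < l n)); [|apply eventually_pos, hl].
    intros n hn. symmetry. apply scaled_diff_rec, hn.
  + apply is_lim_seq_minus'; [apply is_lim_seq_mult'; assumption|].
    apply (is_lim_seq_scal_l _ _ (Finite (Derive_n gauss (pred a) y))), L2.
Qed.

Lemma is_lim_seq_floor_index (l : nat -> R) (y : R) : is_lim_seq l p_infty ->
  is_lim_seq (fun n => (IZR (Int_part (y * sqrt (l n) + l n)) - l n) / sqrt (l n)) y.
Proof.
intros hl.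
apply (is_lim_seq_le_le_loc (fun n => y - / sqrt (l n)) _ (fun _ => y)).
- apply (filter_imp (fun n => 0 < l n)); [|apply eventually_pos, hl].
  intros n hn. assert (hs : 0 < sqrt (l n)) by (apply sqrt_lt_R0; exact hn).
  destruct (base_Int_part (y * sqrt (l n) + l n)) as [b1 b2].
  set (e := IZR (Int_part (y * sqrt (l n) + l n)) - (y * sqrt (l n) + l n)).
  assert (he : -1 <= e <= 0) by (unfold e; lra).
  replace ((IZR (Int_part (y * sqrt (l n) + l n)) - l n) / sqrt (l n))
    with (y + e * / sqrt (l n)) by (unfold e; field; lra).
  assert (0 < / sqrt (l n)) by (apply Rinv_0_lt_compat, hs).
  split; nra.
- replace (Finite y) with (Finite (y - 0)) by (f_equal; ring).
  apply is_lim_seq_minus'; [apply is_lim_seq_const|apply is_lim_seq_inv_sqrt, hl].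
- apply is_lim_seq_const.
Qed.

Lemma is_lim_seq_lam (d : nat) : (1 <= d)%nat -> is_lim_seq (lam d) p_infty.
Proof.
intros hd. apply (is_lim_seq_ext (fun n => / INR d * INR n)).
- intros n. unfold lam, Rdiv. apply Rmult_comm.
- apply is_lim_seq_scal_INR, Rinv_0_lt_compat, lt_0_INR. lia.
Qed.

(** * Exponential tail bounds *)

(* With [s = sqrt l] and [u = (k - l) / l], [sqrt_poisson_eq] reads
   [sqrt l * poisson l k * exp (|k - l| / s) = exp (tail_exponent s u - stirling_err k)]. *)
Definition tail_exponent (s u : R) : R := - ln (1 + u) / 2 - s ^ 2 * bennett u + s * Rabs u.

Lemma ln_2_lt_1 : ln 2 < 1.
Proof.
rewrite <- (ln_exp 1). apply ln_increasing; [lra|].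
generalize (exp_ineq1 1 ltac:(lra)). lra.
Qed.

Lemma tail_exponent_le_neg (s u : R) : 0 < s -> -1 < u <= 0 -> 1 <= s ^ 2 * (1 + u) ->
  tail_exponent s u <= 8.
Proof.
intros hs hu hK. unfold tail_exponent. rewrite Rabs_left1 by lra.
assert (Hb := bennett_ge_neg u hu).
assert (0 <= s ^ 2) by nra.
assert (s ^ 2 * (u ^ 2 / 2) <= s ^ 2 * bennett u) by (apply Rmult_le_compat_l; lra).
destruct (Rle_dec u (- / 2)) as [hlo|hhi].
- assert (Hln : - ln (1 + u) <= 2 * s).
  { assert (Hl : ln (/ s ^ 2) <= ln (1 + u)).
    { apply ln_le; [apply Rinv_0_lt_compat; nra|].
      apply (Rmult_le_reg_l (s ^ 2)); [nra|]. rewrite Rinv_r; nra. }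
    rewrite ln_Rinv, ln_pow in Hl by nra.
    generalize (ln_le_self s hs). simpl (INR 2) in Hl. lra. }
  assert (s * - u <= s) by nra.
  assert (/ 4 <= u ^ 2) by nra.
  assert (s ^ 2 * (/ 4 / 2) <= s ^ 2 * (u ^ 2 / 2)) by (apply Rmult_le_compat_l; lra).
  assert (0 <= (s - 8) ^ 2) by apply pow2_ge_0.
  nra.
- assert (Hln : - ln (1 + u) <= 1).
  { assert (Hl : ln (/ 2) <= ln (1 + u)) by (apply ln_le; lra).
    rewrite ln_Rinv in Hl by lra. generalize ln_2_lt_1. lra. }
  nra.
Qed.

Lemma tail_exponent_le_pos (s u : R) : 0 < s -> 0 <= u <= 1 -> tail_exponent s u <= 1.
Proof.
intros hs hu. unfold tail_exponent. rewrite Rabs_pos_eq by lra.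
assert (0 <= ln (1 + u)) by (rewrite <- ln_1; apply ln_le; lra).
assert (u ^ 2 / 4 <= bennett u).
{ apply (Rle_trans _ (u ^ 2 / (2 * (1 + u)))); [|apply bennett_ge_pos; lra].
  apply Rmult_le_compat_l; [nra|]. apply Rinv_le_contravar; lra. }
assert (s ^ 2 * (u ^ 2 / 4) <= s ^ 2 * bennett u) by (apply Rmult_le_compat_l; nra).
assert (0 <= (s * u / 2 - 1) ^ 2) by apply pow2_ge_0.
nra.
Qed.

Lemma tail_exponent_le_large (s u : R) : 4 <= s -> 1 <= u -> tail_exponent s u <= 0.
Proof.
intros hs hu. unfold tail_exponent. rewrite Rabs_pos_eq by lra.
assert (0 <= ln (1 + u)) by (rewrite <- ln_1; apply ln_le; lra).
assert (u / 4 <= bennett u).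
{ apply (Rle_trans _ (u ^ 2 / (2 * (1 + u)))); [|apply bennett_ge_pos; lra].
  apply (Rmult_le_reg_r (2 * (1 + u))); [lra|].
  replace (u ^ 2 / (2 * (1 + u)) * (2 * (1 + u))) with (u ^ 2) by (field; lra). nra. }
assert (s ^ 2 * (u / 4) <= s ^ 2 * bennett u) by (apply Rmult_le_compat_l; nra).
assert (0 <= s * u * (s / 4 - 1)) by (apply Rmult_le_pos; nra).
nra.
Qed.

(* For bounded [s] the mass [K = s ^ 2 (1 + u)] is either large, where [s ^ 2 * bennett u]
   beats [s u <= K H], or bounded, where [s u <= K H] is itself bounded. *)
Lemma tail_exponent_le_bounded (s u H : R) : 0 < s -> / s <= H -> s < 4 -> 0 <= u ->
  tail_exponent s u <= 16 * exp (1 + H) * H.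
Proof.
intros hs hH hs4 hu. unfold tail_exponent. rewrite Rabs_pos_eq by lra.
assert (0 < / s) by (apply Rinv_0_lt_compat, hs).
assert (hln : 0 <= ln (1 + u)) by (rewrite <- ln_1; apply ln_le; lra).
set (K := s ^ 2 * (1 + u)).
assert (hsu : s * u <= K * H).
{ apply (Rle_trans _ (K * / s)); [unfold K; field_simplify; nra|].
  apply Rmult_le_compat_l; [unfold K; nra|exact hH]. }
assert (EK : s ^ 2 * bennett u = K * ln (1 + u) - K + s ^ 2) by (unfold K, bennett; ring).
assert (0 <= H) by lra. assert (0 < exp (1 + H)) by apply exp_pos.
destruct (Rle_dec (16 * exp (1 + H)) K) as [hK|hK].
- assert (1 + H <= ln (1 + u)).
  { rewrite <- (ln_exp (1 + H)). apply ln_le; [apply exp_pos|].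
    apply (Rmult_le_reg_l (s ^ 2)); [nra|]. fold K.
    assert (s ^ 2 <= 16) by nra.
    apply (Rle_trans _ (16 * exp (1 + H))); [apply Rmult_le_compat_r; lra|exact hK]. }
  assert (K * (1 + H) <= K * ln (1 + u)) by (apply Rmult_le_compat_l; [unfold K; nra|lra]).
  assert (0 <= 16 * exp (1 + H) * H) by (apply Rmult_le_pos; lra).
  nra.
- assert (0 <= s ^ 2 * bennett u) by (apply Rmult_le_pos; [nra|apply bennett_nonneg; lra]).
  assert (K * H <= 16 * exp (1 + H) * H) by (apply Rmult_le_compat_r; lra).
  lra.
Qed.

Lemma tail_exponent_le (s u H : R) : 0 < s -> / s <= H -> -1 < u -> 1 <= s ^ 2 * (1 + u) ->
  tail_exponent s u <= 8 + 16 * exp (1 + H) * H.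
Proof.
intros hs hH hu hK.
assert (0 < / s) by (apply Rinv_0_lt_compat, hs).
assert (0 <= 16 * exp (1 + H) * H) by (apply Rmult_le_pos; [generalize (exp_pos (1 + H)); lra|lra]).
destruct (Rle_dec u 0).
- generalize (tail_exponent_le_neg s u hs ltac:(lra) hK). lra.
- destruct (Rle_dec u 1).
  + generalize (tail_exponent_le_pos s u hs ltac:(lra)). lra.
  + destruct (Rle_dec 4 s).
    * generalize (tail_exponent_le_large s u ltac:(lra) ltac:(lra)). lra.
    * generalize (tail_exponent_le_bounded s u H hs hH ltac:(lra) ltac:(lra)). lra.
Qed.

Definition tail_const (H : R) : R := exp (8 + 16 * exp (1 + H) * H).

Lemma poisson_nonneg (l : R) (k : Z) : 0 < l -> 0 <= poisson l k.
Proof.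
intros hl. unfold poisson. destruct (k <? 0)%Z; [lra|].
apply Rmult_le_pos; [apply Rmult_le_pos; [apply pow_le; lra|left; apply exp_pos]|].
left. apply Rinv_0_lt_compat, INR_fact_lt_0.
Qed.

Theorem sqrt_poisson_le (l H : R) (k : Z) : 0 < l -> / sqrt l <= H ->
  sqrt l * poisson l k <= tail_const H * exp (- Rabs ((IZR k - l) / sqrt l)).
Proof.
intros hl hH.
set (s := sqrt l) in *. assert (hs : 0 < s) by (apply sqrt_lt_R0, hl).
assert (hss : s ^ 2 = l) by (apply pow2_sqrt; lra).
assert (hC : exp 1 <= tail_const H).
{ apply exp_le. assert (0 < / s) by (apply Rinv_0_lt_compat, hs).
  assert (0 <= 16 * exp (1 + H) * H) by (apply Rmult_le_pos; [generalize (exp_pos (1 + H))|]; lra).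
  lra. }
rewrite exp_Ropp. set (X := exp (Rabs ((IZR k - l) / s))).
assert (hX : 0 < X) by apply exp_pos.
apply (Rmult_le_reg_r X); [exact hX|]. replace (tail_const H * / X * X) with (tail_const H) by (field; lra).
destruct (Z_lt_le_dec k 0) as [hneg|hnneg]; [|destruct (Z.eq_dec k 0) as [->|hk0]].
- unfold poisson. rewrite (proj2 (Z.ltb_lt k 0) hneg), Rmult_0_r, Rmult_0_l.
  unfold tail_const. left. apply exp_pos.
- unfold poisson, X. simpl. rewrite <- hss.
  replace ((0 - s ^ 2) / s) with (- s) by (field; lra).
  rewrite Rabs_Ropp, Rabs_pos_eq by lra.
  assert (0 <= (s - 1) ^ 2) by apply pow2_ge_0.
  apply (Rle_trans _ (exp (2 * s - s ^ 2))); [|apply (Rle_trans _ (exp 1)); [apply exp_le; nra|exact hC]].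
  replace (2 * s - s ^ 2) with (s + (- s ^ 2 + s)) by ring. rewrite !exp_plus.
  assert (s <= exp s) by (generalize (exp_ineq1_le s); lra).
  assert (0 < exp (- s ^ 2) * exp s) by (apply Rmult_lt_0_compat; apply exp_pos).
  replace (s * (1 * exp (- s ^ 2) / 1) * exp s) with (s * (exp (- s ^ 2) * exp s)) by field.
  apply Rmult_le_compat_r; lra.
- set (u := (IZR k - l) / l).
  assert (hK : 1 <= IZR k) by (apply IZR_le; lia).
  assert (Ex : (IZR k - l) / s = s * u) by (unfold u; rewrite <- hss; field; lra).
  unfold X, s. rewrite sqrt_poisson_eq by (lra || lia). fold s u. rewrite Ex, <- exp_plus.
  unfold tail_const. apply exp_le.
  assert (Hst := stirling_const_le (Z.to_nat k) ltac:(lia)).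
  assert (Ht := tail_exponent_le s u H hs hH).
  unfold tail_exponent in Ht. rewrite hss in Ht.
  rewrite Rabs_mult, (Rabs_pos_eq s) by lra.
  assert (-1 < u) by (unfold u; apply (Rmult_lt_reg_r l); [lra|]; field_simplify; lra).
  assert (1 <= l * (1 + u)) by (unfold u; field_simplify; lra).
  generalize stirling_const_nonneg. specialize (Ht ltac:(lra) ltac:(lra)). lra.
Qed.

Definition tail_weight (x : R) (m : nat) : R := (1 + Rabs x) ^ m * exp (- Rabs x).

Lemma tail_weight_shift (x c H : R) (m m' : nat) : Rabs c <= H -> (m <= m')%nat ->
  tail_weight (x + c) m <= (1 + H) ^ m * exp H * tail_weight x m'.
Proof.
intros hc hm. unfold tail_weight.
assert (Hxc : Rabs (x + c) <= Rabs x + Rabs c) by apply Rabs_triang.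
assert (Hx : Rabs x <= Rabs (x + c) + Rabs c).
{ replace x with (x + c + - c) at 1 by ring. rewrite <- (Rabs_Ropp c). apply Rabs_triang. }
assert (0 <= Rabs x) by apply Rabs_pos. assert (0 <= Rabs c) by apply Rabs_pos.
assert (0 <= Rabs (x + c)) by apply Rabs_pos.
replace ((1 + H) ^ m * exp H * ((1 + Rabs x) ^ m' * exp (- Rabs x)))
  with (((1 + H) ^ m * (1 + Rabs x) ^ m') * (exp H * exp (- Rabs x))) by ring.
apply Rmult_le_compat; [apply pow_le; lra|left; apply exp_pos| |].
- apply (Rle_trans _ ((1 + H) ^ m * (1 + Rabs x) ^ m)).
  + rewrite <- Rpow_mult_distr. apply pow_incr. nra.
  + apply Rmult_le_compat_l; [apply pow_le; lra|]. apply Rle_pow; [lra|exact hm].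
- rewrite <- exp_plus. apply exp_le. lra.
Qed.

Lemma abs_mul_tail_weight (x c H : R) (m : nat) : Rabs c <= H ->
  Rabs (x + c) * tail_weight x m <= (1 + H) * tail_weight x (S m).
Proof.
intros hc. unfold tail_weight. simpl pow.
assert (0 <= Rabs x) by apply Rabs_pos. assert (0 <= Rabs c) by apply Rabs_pos.
assert (Rabs (x + c) <= Rabs x + Rabs c) by apply Rabs_triang.
assert (Hw : 0 <= (1 + Rabs x) ^ m * exp (- Rabs x))
  by (apply Rmult_le_pos; [apply pow_le; lra|left; apply exp_pos]).
replace ((1 + H) * ((1 + Rabs x) * (1 + Rabs x) ^ m * exp (- Rabs x)))
  with ((1 + H) * (1 + Rabs x) * ((1 + Rabs x) ^ m * exp (- Rabs x))) by ring.
apply Rmult_le_compat_r; [exact Hw|nra].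
Qed.

(* Each step of [scaled_diff_rec] shifts [k] by at most 2, i.e. [x] by at most [2 H], and
   multiplies by at most [|x| + H]. *)
Lemma scaled_diff_le_succ (H Ca Cp l : R) (a : nat) (k : Z) :
  0 <= H -> 0 <= Ca -> 0 <= Cp -> 0 < l -> / sqrt l <= H ->
  Rabs (scaled_diff l a (k + 1)) <= Ca * tail_weight ((IZR (k + 1) - l) / sqrt l) a ->
  Rabs (scaled_diff l (pred a) (k + 2))
    <= Cp * tail_weight ((IZR (k + 2) - l) / sqrt l) (pred a) ->
  Rabs (scaled_diff l (S a) k)
    <= (Ca * ((1 + H) ^ a * exp H) * (1 + H) + INR a * (Cp * ((1 + 2 * H) ^ pred a * exp (2 * H))))
       * tail_weight ((IZR k - l) / sqrt l) (S a).
Proof.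
intros hH hCa hCp hl hs Ba Bp.
assert (hsq : 0 < sqrt l) by (apply sqrt_lt_R0, hl).
assert (hh : 0 < / sqrt l) by (apply Rinv_0_lt_compat, hsq).
assert (0 <= (1 + H) ^ a * exp H) by (apply Rmult_le_pos; [apply pow_le|left; apply exp_pos]; lra).
assert (0 <= INR a) by apply pos_INR.
rewrite scaled_diff_rec by exact hl.
set (x := (IZR k - l) / sqrt l) in *.
assert (e1 : (IZR (k + 1) - l) / sqrt l = x + / sqrt l) by (unfold x; rewrite plus_IZR; field; lra).
assert (e2 : (IZR (k + 2) - l) / sqrt l = x + 2 * / sqrt l) by (unfold x; rewrite plus_IZR; field; lra).
assert (e3 : (l - IZR k - 1) / sqrt l = - (x + / sqrt l)) by (unfold x; field; lra).
rewrite e1 in Ba. rewrite e2 in Bp.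
assert (S1 : tail_weight (x + / sqrt l) a <= (1 + H) ^ a * exp H * tail_weight x a)
  by (apply tail_weight_shift; [rewrite Rabs_pos_eq; lra|lia]).
assert (M1 : Rabs (x + / sqrt l) * tail_weight x a <= (1 + H) * tail_weight x (S a))
  by (apply abs_mul_tail_weight; rewrite Rabs_pos_eq; lra).
assert (P1 : Rabs (scaled_diff l a (k + 1)) * Rabs (x + / sqrt l)
             <= Ca * ((1 + H) ^ a * exp H) * (1 + H) * tail_weight x (S a)).
{ apply (Rle_trans _ (Ca * ((1 + H) ^ a * exp H * tail_weight x a) * Rabs (x + / sqrt l))).
  { apply Rmult_le_compat_r; [apply Rabs_pos|].
    apply (Rle_trans _ _ _ Ba). apply Rmult_le_compat_l; assumption. }
  replace (Ca * ((1 + H) ^ a * exp H * tail_weight x a) * Rabs (x + / sqrt l))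
    with (Ca * ((1 + H) ^ a * exp H) * (Rabs (x + / sqrt l) * tail_weight x a)) by ring.
  rewrite (Rmult_assoc _ (1 + H)).
  apply Rmult_le_compat_l; [apply Rmult_le_pos|]; assumption. }
assert (P2 : INR a * Rabs (scaled_diff l (pred a) (k + 2))
             <= INR a * (Cp * ((1 + 2 * H) ^ pred a * exp (2 * H))) * tail_weight x (S a)).
{ rewrite !Rmult_assoc. apply Rmult_le_compat_l; [lra|].
  apply (Rle_trans _ _ _ Bp). apply Rmult_le_compat_l; [exact hCp|].
  rewrite <- Rmult_assoc. apply tail_weight_shift; [rewrite Rabs_pos_eq; lra|lia]. }
rewrite e3. eapply Rle_trans; [apply Rabs_triang|].
rewrite Rabs_Ropp, !Rabs_mult, Rabs_Ropp, (Rabs_pos_eq (INR a)) by lra.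
lra.
Qed.

Theorem scaled_diff_le (H : R) (a : nat) : 0 <= H ->
  exists C, 0 <= C /\ forall l k, 0 < l -> / sqrt l <= H ->
    Rabs (scaled_diff l a k) <= C * tail_weight ((IZR k - l) / sqrt l) a.
Proof.
intros hH. induction a as [a IH] using lt_wf_ind. destruct a as [|a].
- exists (tail_const H). split; [left; apply exp_pos|].
  intros l k hl hs. unfold scaled_diff, tail_weight. simpl.
  rewrite Rmult_1_r, Rmult_1_l, Rabs_pos_eq.
  + apply sqrt_poisson_le; assumption.
  + apply Rmult_le_pos; [apply sqrt_pos|apply poisson_nonneg, hl].
- destruct (IH a ltac:(lia)) as [Ca [hCa Ba]].
  destruct (IH (pred a) ltac:(lia)) as [Cp [hCp Bp]].
  exists (Ca * ((1 + H) ^ a * exp H) * (1 + H)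
          + INR a * (Cp * ((1 + 2 * H) ^ pred a * exp (2 * H)))).
  split; [|intros l k hl hs; apply scaled_diff_le_succ; auto].
  assert (0 <= (1 + H) ^ a * exp H) by (apply Rmult_le_pos; [apply pow_le|left; apply exp_pos]; lra).
  assert (0 <= (1 + 2 * H) ^ pred a * exp (2 * H))
    by (apply Rmult_le_pos; [apply pow_le|left; apply exp_pos]; lra).
  assert (0 <= INR a) by apply pos_INR.
  apply Rplus_le_le_0_compat.
  + apply Rmult_le_pos; [apply Rmult_le_pos|]; lra.
  + apply Rmult_le_pos; [|apply Rmult_le_pos]; lra.
Qed.

Lemma inv_sqrt_lam_le (d n : nat) : (1 <= d)%nat -> (1 <= n)%nat -> / sqrt (lam d n) <= sqrt (INR d).
Proof.
intros hd hn. rewrite <- step_eq by assumption. unfold step. apply sqrt_le_1_alt.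
assert (1 <= INR n) by (apply (le_INR 1); exact hn). assert (1 <= INR d) by (apply (le_INR 1); exact hd).
unfold Rdiv. rewrite <- (Rmult_1_r (INR d)) at 2. apply Rmult_le_compat_l; [lra|].
rewrite <- Rinv_1. apply Rinv_le_contravar; lra.
Qed.

Lemma tail_weight_le_poly (y : R) (m : nat) :
  tail_weight y m <= 2 ^ m * (1 + y ^ 2) ^ m * exp (- Rabs y).
Proof.
unfold tail_weight. apply Rmult_le_compat_r; [left; apply exp_pos|].
rewrite <- Rpow_mult_distr. apply pow_incr.
assert (0 <= Rabs y) by apply Rabs_pos. rewrite <- pow2_abs. nra.
Qed.

Theorem Delta_iter_f_n_le (d a : nat) : (1 <= d)%nat ->
  exists C, forall n y, (1 <= n)%nat ->
    Rabs (Delta_iter d n a (f_n d n) y) <= C * (1 + y ^ 2) ^ a * exp (- Rabs y).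
Proof.
intros hd. set (H := sqrt (INR d)).
destruct (scaled_diff_le H a (sqrt_pos _)) as [C [hC B]].
exists (C * ((1 + H) ^ a * exp H) * 2 ^ a). intros n y hn.
set (l := lam d n).
assert (hl : 0 < l) by (apply lam_pos; assumption).
assert (hs : 0 < sqrt l) by (apply sqrt_lt_R0, hl).
assert (hlH : / sqrt l <= H) by (apply inv_sqrt_lam_le; assumption).
rewrite Delta_iter_f_n by assumption. fold l.
set (k := Int_part (y * sqrt l + l)).
destruct (base_Int_part (y * sqrt l + l)) as [b1 b2]. fold k in b1, b2.
set (c := (IZR k - l) / sqrt l - y).
assert (hc : Rabs c <= H).
{ replace c with ((IZR k - (y * sqrt l + l)) * / sqrt l) by (unfold c; field; lra).
  rewrite Rabs_mult, (Rabs_pos_eq (/ sqrt l)) by (left; apply Rinv_0_lt_compat, hs).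
  apply (Rle_trans _ (1 * / sqrt l)); [|lra].
  apply Rmult_le_compat_r; [left; apply Rinv_0_lt_compat, hs|]. apply Rabs_le. lra. }
apply (Rle_trans _ _ _ (B l k hl hlH)).
replace ((IZR k - l) / sqrt l) with (y + c) by (unfold c; ring).
assert (S := tail_weight_shift y c H a a hc (le_n a)).
assert (P := tail_weight_le_poly y a).
assert (0 <= (1 + H) ^ a * exp H)
  by (apply Rmult_le_pos; [apply pow_le; generalize (sqrt_pos (INR d)); fold H; lra|left; apply exp_pos]).
apply (Rle_trans _ _ _ (Rmult_le_compat_l _ _ _ hC S)).
replace (C * ((1 + H) ^ a * exp H) * 2 ^ a * (1 + y ^ 2) ^ a * exp (- Rabs y))
  with (C * ((1 + H) ^ a * exp H * (2 ^ a * (1 + y ^ 2) ^ a * exp (- Rabs y)))) by ring.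
apply Rmult_le_compat_l; [exact hC|]. apply Rmult_le_compat_l; assumption.
Qed.

Fixpoint padd (p q : list R) : list R :=
  match p, q with
  | nil, _ => q
  | _, nil => p
  | a :: p', b :: q' => (a + b) :: padd p' q'
  end.

Lemma peval_padd (p q : list R) (y : R) : peval (padd p q) y = peval p y + peval q y.
Proof.
revert q. induction p as [|a p IH]; intros q; [simpl; ring|].
destruct q as [|b q]; simpl; [ring|]. rewrite IH. ring.
Qed.

Fixpoint scaled_sq_pow (c : R) (a : nat) : list R :=
  match a with
  | O => c :: nil
  | S a' => padd (scaled_sq_pow c a') (0 :: 0 :: scaled_sq_pow c a')
  end.

Lemma peval_scaled_sq_pow (c : R) (a : nat) (y : R) :
  peval (scaled_sq_pow c a) y = c * (1 + y ^ 2) ^ a.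
Proof.
induction a as [|a IH]; [simpl; ring|].
cbn [scaled_sq_pow]. rewrite peval_padd. cbn [peval]. rewrite IH.
change ((1 + y ^ 2) ^ S a) with ((1 + y ^ 2) * (1 + y ^ 2) ^ a). ring.
Qed.

Theorem lemma5 (d : nat) (hd : (1 <= d)%nat) :
  (forall (alpha : nat) (y : R),
      is_lim_seq (fun n : nat => Delta_iter d n alpha (f_n d n) y)
                 (Derive_n gauss alpha y)) /\
  (forall alpha : nat, exists P : list R,
      forall (n : nat) (y : R), (1 <= n)%nat ->
        Rabs (Delta_iter d n alpha (f_n d n) y) < peval P y * exp (- Rabs y)).
Proof.
split.
- intros alpha y.
  apply (is_lim_seq_ext_loc
           (fun n => scaled_diff (lam d n) alpha (Int_part (y * sqrt (lam d n) + lam d n)))).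
  { exists 1%nat. intros n hn. symmetry. apply Delta_iter_f_n; assumption. }
  apply is_lim_seq_scaled_diff; [apply is_lim_seq_lam, hd|].
  apply is_lim_seq_floor_index, is_lim_seq_lam, hd.
- intros alpha. destruct (Delta_iter_f_n_le d alpha hd) as [C HC].
  exists (padd (scaled_sq_pow C alpha) (1 :: nil)). intros n y hn.
  rewrite peval_padd, peval_scaled_sq_pow. simpl peval.
  generalize (HC n y hn) (exp_pos (- Rabs y)). nra.
Qed.
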